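(* Let $G$ be a finite simple graph on vertex set $\{x_1,\dots,x_n\}$, let $\Bbbk$ be a field and $S=\Bbbk[x_1,\dots,x_n]$. Let $x$ be a leaf of $G$ with neighbor $y$. Then for all $k\geq 2$, \[I(G)^{[k]}:(xy)=I(G-\{x,y\})^{[k-1]},\] both considered as ideals of $S$.
   Context: A leaf is a vertex of degree $1$. $G-U$ is the induced subgraph on $V(G)\setminus U$. For a graph $H$ with vertices among $x_1,\dots,x_n$ and $k\ge1$, $I(H)^{[k]}$ is the ideal generated by the products $e_1\cdots e_k$ over all matchings $\{e_1,\dots,e_k\}$ of $H$ of size $k$ (edge $\{x_i,x_j\}$ identified with the monomial $x_ix_j$); it is $(0)$ if $k$ exceeds the matching number of $H$. $I:(m)=\{f\in S: fm\in I\}$. *)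

From HB Require Import structures.
From mathcomp Require Import all_boot all_order all_algebra.
From mathcomp Require Export mpoly.
Set Implicit Arguments. Unset Strict Implicit. Unset Printing Implicit Defensive.
Import GRing.Theory.
Local Open Scope ring_scope.

(* A simple graph on vertices x_1..x_n (indexed by 'I_n) is a symmetric,
   irreflexive relation e : rel 'I_n. *)

Definition is_edge n (e : rel 'I_n) (A : {set 'I_n}) : bool :=
  [exists u, exists v, e u v && (A == [set u; v])].

Definition is_matching n (e : rel 'I_n) (k : nat) (M : {set {set 'I_n}}) : bool :=
  [&& [forall A in M, is_edge e A],
      [forall A in M, forall B in M, (A != B) ==> [disjoint A & B]]
    & #|M| == k].

Definition matching_mono (K : fieldType) n (M : {set {set 'I_n}}) : {mpoly K[n]} :=
  \prod_(A in M) \prod_(i in A) 'X_i.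

(* Membership in the ideal I(H)^[k] of S = K[x_1..x_n]: f is an S-linear
   combination of the products e_1...e_k over matchings of size k. If there is
   no such matching, the ideal is (0). *)
Definition in_matching_power (K : fieldType) n (e : rel 'I_n) (k : nat)
    (f : {mpoly K[n]}) : Prop :=
  exists c : {set {set 'I_n}} -> {mpoly K[n]},
    f = \sum_(M | is_matching e k M) c M * matching_mono K M.

Definition remove_vertices n (e : rel 'I_n) (U : {set 'I_n}) : rel 'I_n :=
  fun u v => [&& e u v, u \notin U & v \notin U].

From HB Require Import structures.
From mathcomp Require Import all_boot all_order all_algebra.
From mathcomp Require Import mpoly.
Set Implicit Arguments. Unset Strict Implicit. Unset Printing Implicit Defensive.
Import GRing.Theory.
Local Open Scope ring_scope.

(* I(G)^[k] is generated by the squarefree monomials x_(V(M)) of the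
   k-matchings M of G, so a polynomial lies in it iff each monomial of its
   support is divisible by some x_(V(M)).  Every edge through the leaf x
   contains y, so at most one edge of a matching meets {x, y}: deleting it
   turns a k-matching of G into a (k-1)-matching of G - {x, y} covering no
   new vertex, and adding the edge xy goes back.  Since the support of
   f * x y is that of f shifted by x y, the two membership criteria agree. *)

Section MonomialIdeal.
Variables (R : nzRingType) (n : nat).

Lemma mem_msuppMX (p : {mpoly R[n]}) t m :
  ((t + m)%MM \in msupp (p * 'X_[t])) = (m \in msupp p).
Proof. by rewrite !mcoeff_msupp mcoeffMX. Qed.

Lemma msuppMX_addm (p : {mpoly R[n]}) t m : m \in msupp (p * 'X_[t]) ->
  exists2 m', m = (t + m')%MM & m' \in msupp p.
Proof. by rewrite (perm_mem (msuppMX p t)) => /mapP [m' ? ->]; exists m'. Qed.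

Lemma monomial_ideal_memP (I : finType) (P : pred I) (g : I -> 'X_{1..n})
    (f : {mpoly R[n]}) :
  (exists c : I -> {mpoly R[n]}, f = \sum_(i | P i) c i * 'X_[g i]) <->
  (forall m, m \in msupp f -> exists2 i, P i & (g i <= m)%MM).
Proof.
split=> [[c ->] m /msupp_sum_le /flattenP [s /mapP [i]] | divides].
  rewrite mem_filter => /andP [Pi _] -> /msuppMX_addm [m' -> _].
  by exists i => //; apply: lem_addr.
pose gen m := [pick i | P i && (g i <= m)%MM].
exists (fun i => \sum_(m <- msupp f | gen m == Some i) f@_m *: 'X_[m - g i]).
rewrite [LHS]mpolyE (eq_bigr _ (fun i _ => big_distrl _ _ _)) /=.
rewrite (exchange_big_dep xpredT) //=; apply: eq_big_seq => m mf.
have [i /andP [Pi gim] genE] : exists2 i, P i && (g i <= m)%MM & gen m = Some i.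
  rewrite /gen; case: pickP => [i ?|none]; first by exists i.
  by have [i Pi gim] := divides m mf; move: (none i); rewrite Pi gim.
rewrite (big_pred1 i) => [|j]; last first.
  rewrite genE /= (inj_eq Some_inj) eq_sym.
  by case: eqP => [->|_]; rewrite ?Pi ?andbF.
by rewrite -!mul_mpolyC -mulrA -mpolyXD submK.
Qed.

End MonomialIdeal.

Section SquarefreeMonomials.
Variable n : nat.
Implicit Types (A B : {set 'I_n}) (m : 'X_{1..n}).

Definition mnm_of_set A : 'X_{1..n} := [multinom (i \in A : nat) | i < n].

Lemma mnm_of_setE A i : mnm_of_set A i = (i \in A).
Proof. exact: mnmE. Qed.

Lemma mpolyX_set (R : nzRingType) A :
  'X_[mnm_of_set A] = \prod_(i in A) ('X_i : {mpoly R[n]}).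
Proof.
rewrite mpolyXE_id [RHS]big_mkcond /=; apply: eq_bigr => i _.
by rewrite mnm_of_setE; case: (i \in A); rewrite ?expr1 ?expr0.
Qed.

Lemma lem_mnm_of_setS A B : A \subset B -> (mnm_of_set A <= mnm_of_set B)%MM.
Proof.
move=> /subsetP AB; apply/mnm_lepP => i; rewrite !mnm_of_setE.
by case: (boolP (i \in A)) => // /AB ->.
Qed.

Lemma lem_mnm_of_setU A B m : (mnm_of_set B <= m)%MM ->
  (mnm_of_set (A :|: B) <= mnm_of_set A + m)%MM.
Proof.
move=> /mnm_lepP le; apply/mnm_lepP => i; have := le i.
by rewrite mnmDE !mnm_of_setE inE; case: (i \in A); case: (i \in B).
Qed.

Lemma lem_mnm_of_setD A B m : (mnm_of_set A <= mnm_of_set B + m)%MM ->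
  (mnm_of_set (A :\: B) <= m)%MM.
Proof.
move=> /mnm_lepP le; apply/mnm_lepP => i; have := le i.
by rewrite mnmDE !mnm_of_setE inE; case: (i \in A); case: (i \in B).
Qed.

End SquarefreeMonomials.

Lemma cover_setU1 (T : finType) (A : {set T}) (P : {set {set T}}) :
  cover (A |: P) = A :|: cover P.
Proof. by rewrite /cover bigcup_setU big_set1. Qed.

Section Matchings.
Variables (n : nat) (e : rel 'I_n).
Implicit Types (A B : {set 'I_n}) (M : {set {set 'I_n}}).

Lemma is_edge_remove_vertices U A :
  is_edge (remove_vertices e U) A = is_edge e A && [disjoint A & U].
Proof.
apply/existsP/andP => [[u /existsP [v /andP [/and3P [euv uU vU] /eqP AE]]] | ].
  split.
    by apply/existsP; exists u; apply/existsP; exists v; rewrite euv AE eqxx.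
  by rewrite AE disjoints_subset subUset !sub1set !inE uU vU.
case=> /existsP [u /existsP [v /andP [euv /eqP AE]]].
rewrite AE disjoints_subset subUset !sub1set !inE => /andP [uU vU].
by exists u; apply/existsP; exists v; rewrite /remove_vertices euv uU vU eqxx.
Qed.

Lemma is_matching_remove_vertices U k M :
  is_matching (remove_vertices e U) k M =
  is_matching e k M && [forall B in M, [disjoint B & U]].
Proof.
have edgesE : [forall B in M, is_edge (remove_vertices e U) B] =
              [forall B in M, is_edge e B] && [forall B in M, [disjoint B & U]].
  apply/forall_inP/andP => [edges | [/forall_inP edges /forall_inP dis] B BM].
    by split; apply/forall_inP => B /edges;
      rewrite is_edge_remove_vertices => /andP [].
  by rewrite is_edge_remove_vertices edges ?dis.
by rewrite /is_matching edgesE andbAC.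
Qed.

Lemma is_matching_setD1 k M A :
  is_matching e k.+1 M -> A \in M -> is_matching e k (M :\ A).
Proof.
case/and3P => /forall_inP edges /forall_inP dis /eqP cardM AM.
apply/and3P; split.
- by apply/forall_inP => B /setD1P [_ /edges].
- apply/forall_inP => B /setD1P [_ /dis /forall_inP dB].
  by apply/forall_inP => B' /setD1P [_ /dB].
- by move: cardM; rewrite (cardsD1 A) AM add1n => -[->].
Qed.

Lemma is_matching_setU1 k M A : is_matching e k M -> is_edge e A ->
  (forall B, B \in M -> [disjoint A & B]) -> is_matching e k.+1 (A |: M).
Proof.
case/and3P => /forall_inP edges /forall_inP dis /eqP cardM eA disA.
have AnotM : A \notin M.
  apply: contraL eA => /disA; rewrite -setI_eq0 setIid => /eqP ->.
  apply/existsP => -[u /existsP [v /andP [_ /eqP/setP/(_ u)]]].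
  by rewrite !inE eqxx.
apply/and3P; split.
- by apply/forall_inP => B /setU1P [-> //| /edges].
- apply/forall_inP => B /setU1P [-> | BM];
    apply/forall_inP => B' /setU1P [-> | B'M].
  + by rewrite eqxx.
  + by rewrite disA ?implybT.
  + by rewrite disjoint_sym disA ?implybT.
  + exact: (forall_inP (dis B BM)).
- by rewrite cardsU1 AnotM cardM.
Qed.

Lemma matching_monoE (K : fieldType) k M :
  is_matching e k M -> matching_mono K M = 'X_[mnm_of_set (cover M)].
Proof.
case/and3P => _ /forall_inP dis _.
rewrite mpolyX_set /matching_mono big_trivIset //.
by apply/trivIsetP => A B AM BM; apply/implyP; apply: (forall_inP (dis A AM)).
Qed.

Lemma in_matching_powerP (K : fieldType) k (f : {mpoly K[n]}) :
  in_matching_power e k f <->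
  (forall m, m \in msupp f ->
     exists2 M, is_matching e k M & (mnm_of_set (cover M) <= m)%MM).
Proof.
rewrite -(monomial_ideal_memP (is_matching e k) (fun M => mnm_of_set (cover M))).
have sumE c : \sum_(M | is_matching e k M) c M * matching_mono K M =
              \sum_(M | is_matching e k M) c M * 'X_[mnm_of_set (cover M)].
  by apply: eq_bigr => M /matching_monoE ->.
by split=> -[c fE]; exists c; rewrite fE sumE.
Qed.

End Matchings.

Section LeafEdge.
Variables (n : nat) (e : rel 'I_n) (x y : 'I_n).
Hypotheses (esym : forall u v, e u v = e v u) (hxy : e x y).
Hypothesis hleaf : forall z, e x z -> z = y.
Local Notation S := [set x; y].
Local Notation e' := (remove_vertices e [set x; y]).

Lemma edge_meeting_leaf_mem B : is_edge e B -> ~~ [disjoint B & S] -> y \in B.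
Proof.
move=> eB; rewrite -setI_eq0 => /set0Pn [i /setIP [iB]].
rewrite !inE => /orP [] /eqP iE; rewrite iE in iB => //.
move: eB iB => /existsP [u /existsP [v /andP [euv /eqP ->]]].
rewrite !inE => /orP [] /eqP xE; [rewrite -xE in euv | rewrite -xE esym in euv];
  by rewrite (hleaf euv) eqxx ?orbT.
Qed.

Lemma matching_remove_leaf k M : is_matching e k.+1 M ->
  exists2 M', is_matching e' k M' & cover M' \subset cover M :\: S.
Proof.
move=> HM; have /and3P [/forall_inP edges /forall_inP dis /eqP cardM] := HM.
have [A AM others] : exists2 A, A \in M &
    forall B, B \in M -> B != A -> [disjoint B & S].
  case: (pickP [pred B | (B \in M) && ~~ [disjoint B & S]]) =>
      [A /andP [AM AS] | none].
    exists A => // B BM BA; apply/negPn/negP => BS.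
    have yA := edge_meeting_leaf_mem (edges A AM) AS.
    have yB := edge_meeting_leaf_mem (edges B BM) BS.
    have disBA := implyP (forall_inP (dis B BM) A AM) BA.
    by rewrite (disjointFr disBA yB) in yA.
  have [A AM] : exists A, A \in M by apply/set0Pn; rewrite -card_gt0 cardM.
  by exists A => // B BM _; have := none B; rewrite /= BM => /negbFE.
exists (M :\ A).
  rewrite is_matching_remove_vertices is_matching_setD1 //=.
  by apply/forall_inP => B /setD1P [BA BM]; apply: others.
apply/subsetP => i /bigcupP [B /setD1P [BA BM] iB].
rewrite inE; apply/andP; split; last by apply/bigcupP; exists B.
by rewrite (disjointFr (others B BM BA) iB).
Qed.

Lemma matching_add_leaf_edge k M :
  is_matching e' k M -> is_matching e k.+1 (S |: M).
Proof.
rewrite is_matching_remove_vertices => /andP [HM /forall_inP dis].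
apply: is_matching_setU1 => // [|B /dis]; last by rewrite disjoint_sym.
by apply/existsP; exists x; apply/existsP; exists y; rewrite hxy eqxx.
Qed.

End LeafEdge.

Theorem lemma4p4 (K : fieldType) (n : nat) (e : rel 'I_n)
    (esym : forall u v, e u v = e v u) (eirr : forall u, e u u = false)
    (x y : 'I_n) (hxy : e x y) (hleaf : forall z, e x z -> z = y)
    (k : nat) (hk : (2 <= k)%N) :
  forall f : {mpoly K[n]},
    @in_matching_power K n e k (f * ('X_x * 'X_y)) <->
    @in_matching_power K n (remove_vertices e [set x; y]) k.-1 f.
Proof.
have xy : x != y by apply: contraTneq hxy => ->; rewrite eirr.
have XS : 'X_x * 'X_y = 'X_[mnm_of_set [set x; y]] :> {mpoly K[n]}.
  by rewrite mpolyX_set big_setU1 ?inE // big_set1.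
case: k hk => // k _ f /=; rewrite XS !in_matching_powerP; split=> divides m.
- rewrite -(mem_msuppMX _ (mnm_of_set [set x; y])) => /divides [M HM coverM].
  have [M' HM' subM'] := matching_remove_leaf esym hleaf HM.
  exists M' => //.
  exact: lepm_trans (lem_mnm_of_setS subM') (lem_mnm_of_setD coverM).
- case/msuppMX_addm => m' -> /divides [M HM coverM].
  exists ([set x; y] |: M); first exact: matching_add_leaf_edge.
  by rewrite cover_setU1 lem_mnm_of_setU.
Qed.
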